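(* Let $q$ be a prime power. A rank-$r$ matroid $M$ in $\mathcal{M}_q$ is round if and only if $M\cong PG(r-1,q)$.
   Context: A matroid is round if it has no two disjoint cocircuits. For matroids $M_1,M_2$ whose ground sets meet in a set $T$ that is a modular flat of $M_1$ with $M_1|T=M_2|T=N$, the generalized parallel connection $P_N(M_1,M_2)$ is the matroid on $E(M_1)\cup E(M_2)$ whose flats are the sets $Z$ with $Z\cap E(M_i)$ a flat of $M_i$ for $i=1,2$ (if $T=\emptyset$ this is $M_1\oplus M_2$). $\mathcal{M}_q$ is the class of matroids that can be built from projective geometries over $GF(q)$ by a sequence of generalized parallel connections across projective geometries over $GF(q)$. *)

From HB Require Import structures.
From mathcomp Require Import all_boot all_order all_algebra.
Set Implicit Arguments. Unset Strict Implicit. Unset Printing Implicit Defensive.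
Import GRing.Theory.

Record matroid (T : finType) := Matroid {
  ground : {set T};
  indep : {set T} -> bool;
  indep_sub : forall X : {set T}, indep X -> X \subset ground;
  indep0 : indep set0;
  indep_down : forall X Y : {set T}, Y \subset X -> indep X -> indep Y;
  indep_aug : forall X Y : {set T}, indep X -> indep Y -> #|X| < #|Y| ->
                exists2 y, y \in Y :\: X & indep (y |: X)
}.

Section MatroidDefs.
Variables (T : finType) (M : matroid T).

Definition rank (X : {set T}) : nat :=
  \max_(Y : {set T} | (Y \subset X) && indep M Y) #|Y|.

Definition flat_in (S F : {set T}) : Prop :=
  F \subset S /\ forall x : T, x \in S :\: F -> rank F < rank (x |: F).

Definition modular_in (S F : {set T}) : Prop :=
  flat_in S F /\ forall G : {set T}, flat_in S G ->
    rank F + rank G = rank (F :&: G) + rank (F :|: G).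

Definition basis (B : {set T}) : Prop :=
  indep M B /\ forall Y : {set T}, indep M Y -> B \subset Y -> Y = B.

Definition coindep (X : {set T}) : Prop :=
  X \subset ground M /\ exists B, basis B /\ [disjoint X & B].

Definition cocircuit (C : {set T}) : Prop :=
  C \subset ground M /\ ~ coindep C /\ forall Y : {set T}, Y \proper C -> coindep Y.

Definition round : Prop :=
  forall C D : {set T}, cocircuit C -> cocircuit D -> ~ [disjoint C & D].

End MatroidDefs.

(* M|S is isomorphic to PG(n-1, F): a bijection from S onto the points
   (1-dimensional subspaces) of F^n, under which a set of points is independent
   iff the subspaces it spans has dimension equal to the number of points. *)
Definition PG_iso (F : finFieldType) (T : finType) (M : matroid T)
    (S : {set T}) (n : nat) : Prop :=
  exists f : T -> {vspace 'rV[F]_n},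
    [/\ {in S &, injective f},
        (forall x : T, x \in S -> \dim (f x) = 1%N),
        (forall V : {vspace 'rV[F]_n}, \dim V = 1%N -> exists2 x, x \in S & f x = V) &
        (forall X : {set T}, X \subset S ->
           (indep M X <-> \dim (\sum_(x in X) f x)%VS = #|X|))].

(* inMq F M S : the restriction M|S belongs to the class M_q, q = #|F|:
   either it is (isomorphic to) a projective geometry over F, or it is the
   generalized parallel connection of M|S1 and M|S2 (both in M_q) across
   T' = S1 ∩ S2, where T' is a modular flat of M|S1 and M|T' is a projective
   geometry over F.  P_N(M|S1, M|S2) = M|(S1 ∪ S2) is expressed through its
   defining description of flats. *)
Inductive inMq (F : finFieldType) (T : finType) (M : matroid T) : {set T} -> Prop :=
| Mq_PG : forall (S : {set T}) (n : nat), S \subset ground M -> PG_iso F M S n -> inMq F M S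
| Mq_gpc : forall (S1 S2 : {set T}) (n : nat),
    inMq F M S1 -> inMq F M S2 ->
    modular_in M S1 (S1 :&: S2) ->
    PG_iso F M (S1 :&: S2) n ->
    (forall Z : {set T}, Z \subset S1 :|: S2 ->
       (flat_in M (S1 :|: S2) Z <->
        flat_in M S1 (Z :&: S1) /\ flat_in M S2 (Z :&: S2))) ->
    inMq F M (S1 :|: S2).

(* M is round iff its ground set is not the union of two sets of smaller rank
   (complements of cocircuits are exactly the maximal non-spanning sets).
   A projective geometry is round because a vector space is never the union of
   two proper subspaces.  Conversely, in a generalized parallel connection both
   parts are flats, so if the connection is round one part contains the other,
   and induction on the construction leaves a single projective geometry.  The
   parts are flats because every projective-geometry restriction of a member of
   M_q is a flat: by roundness it lies inside one part of each connection, and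
   inside PG(n-1,q) a copy of PG(k-1,q) spanning a k-dimensional subspace
   already uses all (q^k-1)/(q-1) points of that subspace. *)

From mathcomp Require Import all_boot all_order all_algebra all_field.
From mathcomp Require Import zify.
From Stdlib Require Import Classical.
Set Implicit Arguments. Unset Strict Implicit. Unset Printing Implicit Defensive.
Import GRing.Theory.

Section Rank.
Variables (T : finType) (M : matroid T).

Definition basis_in (A I : {set T}) : Prop :=
  [/\ I \subset A, indep M I & #|I| = rank M A].

Lemma indep_leq_rank (X I : {set T}) : I \subset X -> indep M I -> #|I| <= rank M X.
Proof. by move=> sIX iI; apply: (@leq_bigmax_cond _ _ _ I); rewrite sIX iI. Qed.

Lemma basis_in_exists (X : {set T}) : exists I : {set T}, basis_in X I.
Proof.
have : 0 < #|[pred Y : {set T} | (Y \subset X) && indep M Y]|.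
  by apply/card_gt0P; exists set0; rewrite inE sub0set indep0.
move/(eq_bigmax_cond (fun Y : {set T} => #|Y|)) => [I].
by rewrite inE => /andP[sIX iI] eI; exists I.
Qed.

Lemma rankS (X Y : {set T}) : X \subset Y -> rank M X <= rank M Y.
Proof.
move=> sXY; have [I [sIX iI <-]] := basis_in_exists X.
exact: indep_leq_rank (subset_trans sIX sXY) iI.
Qed.

Lemma basis_in_extend (Z I : {set T}) :
  I \subset Z -> indep M I -> exists2 J : {set T}, I \subset J & basis_in Z J.
Proof.
move ek: (rank M Z - #|I|) => k.
elim: k I ek => [|k IH] I ek sIZ iI.
  exists I => //; split => //; apply/eqP; rewrite eqn_leq indep_leq_rank //=.
  by rewrite -subn_eq0 ek.
have [K [sKZ iK eK]] := basis_in_exists Z.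
have [|y /setDP[yK yI] iyI] := indep_aug iI iK; first by rewrite eK -subn_gt0 ek.
have [|||J syIJ bJ] := IH (y |: I) => //.
- by rewrite cardsU1 yI add1n subnS ek.
- by rewrite subUset sub1set (subsetP sKZ) // sIZ.
by exists J => //; apply: subset_trans syIJ; apply: subsetUr.
Qed.

Lemma basis_inU1 (Z J : {set T}) (z : T) :
  basis_in Z J -> rank M Z < rank M (z |: Z) -> indep M (z |: J).
Proof.
move=> [sJZ iJ eJ] ltZ; have [K [sK iK eK]] := basis_in_exists (z |: Z).
have [|y /setDP[yK yJ] iyJ] := indep_aug iJ iK; first by rewrite eJ eK.
case/setU1P: (subsetP sK y yK) => [<- // | yZ].
have := indep_leq_rank (X := Z) _ iyJ; rewrite subUset sub1set yZ sJZ cardsU1 yJ eJ.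
by move=> /(_ isT); rewrite ltnn.
Qed.

Lemma rankU1_lt_sub (Z' Z : {set T}) (z : T) :
  Z' \subset Z -> rank M Z < rank M (z |: Z) -> rank M Z' < rank M (z |: Z').
Proof.
move=> sZ ltZ; have zZ : z \notin Z.
  by apply/negP => zZ; move: (ltZ); rewrite ltnNge rankS // subUset sub1set zZ subxx.
have [I [sIZ' iI eI]] := basis_in_exists Z'.
have [J sIJ bJ] := basis_in_extend (subset_trans sIZ' sZ) iI.
have izI : indep M (z |: I) by apply: indep_down (basis_inU1 bJ ltZ); apply: setUS.
have := indep_leq_rank (setUS [set z] sIZ') izI.
by rewrite cardsU1 eI (contraNN (subsetP (subset_trans sIZ' sZ) z)).
Qed.

Lemma flat_rank_lt (S Z : {set T}) (x : T) :
  flat_in M S Z -> x \in S -> x \notin Z -> rank M Z < rank M S.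
Proof.
move=> [sZS flZ] xS xZ; apply: leq_trans (flZ x _) _; first by rewrite inE xZ.
by rewrite rankS // subUset sub1set xS sZS.
Qed.

Lemma flat_inI (S Z P : {set T}) :
  flat_in M S Z -> P \subset S -> flat_in M P (Z :&: P).
Proof.
move=> [_ flZ] sPS; split=> [|x /setDP[xP]]; first exact: subsetIr.
rewrite inE xP andbT => xZ; apply: rankU1_lt_sub (subsetIl Z P) _.
by apply: flZ; rewrite inE xZ (subsetP sPS).
Qed.

Lemma flat_in_trans (S U Z : {set T}) :
  flat_in M U Z -> flat_in M S U -> flat_in M S Z.
Proof.
move=> [sZU flZ] [sUS flU]; split=> [|x /setDP[xS xZ]]; first exact: subset_trans sUS.
case xU: (x \in U); first by apply: flZ; rewrite inE xZ xU.
by apply: rankU1_lt_sub sZU _; apply: flU; rewrite inE xU xS.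
Qed.

Lemma flat_in_refl (S : {set T}) : flat_in M S S.
Proof. by split=> // x; rewrite setDv inE. Qed.

End Rank.

Section Round.
Variables (T : finType) (M : matroid T).
Local Notation E := (ground M).

Definition round_in (S : {set T}) : Prop :=
  forall A B : {set T}, A :|: B = S -> rank M A < rank M S -> rank M B < rank M S -> False.

Lemma max_indep_basis (I : {set T}) : indep M I -> #|I| = rank M E -> basis M I.
Proof.
move=> iI eI; split=> // Y iY sIY; apply/eqP; rewrite eq_sym eqEcard sIY eI.
exact: indep_leq_rank (indep_sub iY) iY.
Qed.

Lemma rank_leq_basis (B : {set T}) : basis M B -> rank M E <= #|B|.
Proof.
move=> [iB maxB]; rewrite leqNgt; apply/negP => ltB.
have [K [_ iK eK]] := basis_in_exists M E.
have [|y /setDP[_ yB] iyB] := indep_aug iB iK; first by rewrite eK.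
by move: yB; rewrite -(maxB _ iyB (subsetUr _ _)) setU11.
Qed.

Lemma coindepD_rank (A : {set T}) : coindep M (E :\: A) -> rank M E <= rank M A.
Proof.
move=> [_ [B [bB dB]]]; apply: leq_trans (rank_leq_basis bB) (indep_leq_rank _ bB.1).
apply/subsetP => x xB; have := disjointFl dB xB.
by rewrite inE (subsetP (indep_sub bB.1)) // andbT => /negbFE.
Qed.

Lemma cocircuitD_rank (C : {set T}) : cocircuit M C -> rank M (E :\: C) < rank M E.
Proof.
move=> [sCE [nC _]]; rewrite ltn_neqAle rankS ?subsetDl // andbT.
apply: contra_notN nC => /eqP eC; split=> //.
have [I [sI iI eI]] := basis_in_exists M (E :\: C).
exists I; split; first by apply: max_indep_basis; rewrite // eI.
by rewrite disjoint_sym disjoints_subset (subset_trans sI) ?subsetDr.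
Qed.

Lemma cocircuit_sub (X : {set T}) :
  X \subset E -> ~ coindep M X -> exists2 C : {set T}, C \subset X & cocircuit M C.
Proof.
have [n] := ubnP #|X|; elim: n X => // n IH X ltX sXE nX.
case: (classic (exists2 Y : {set T}, Y \proper X & ~ coindep M Y)) => [[Y pYX nY] | minX].
  have sYX := proper_sub pYX.
  have [|||C sCY cC] := IH Y => //; first exact: leq_trans (proper_card pYX) ltX.
    exact: subset_trans sXE.
  by exists C => //; apply: subset_trans sYX.
exists X => //; split=> //; split=> // Y pYX.
by apply: NNPP => nY; apply: minX; exists Y.
Qed.

Lemma round_groundP : round M <-> round_in E.
Proof.
split=> [rM A B eAB ltA ltB | rE C D cC cD dCD].
  have nA : ~ coindep M (E :\: A) by move/coindepD_rank; rewrite leqNgt ltA.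
  have nB : ~ coindep M (E :\: B) by move/coindepD_rank; rewrite leqNgt ltB.
  have [C sC cC] := cocircuit_sub (subsetDl _ _) nA.
  have [D sD cD] := cocircuit_sub (subsetDl _ _) nB.
  apply: (rM C D cC cD); apply: disjointWl sC _; apply: disjointWr sD _.
  by rewrite -setI_eq0 -setDUr eAB setDv.
apply: (rE _ _ _ (cocircuitD_rank cC) (cocircuitD_rank cD)).
by rewrite -setDIr (disjoint_setI0 dCD) setD0.
Qed.

End Round.

Lemma exists_notin_subv2 (K : fieldType) (vT : vectType K) (U W : {vspace vT}) :
  ~~ (fullv <= U)%VS -> ~~ (fullv <= W)%VS -> exists v, (v \notin U) && (v \notin W).
Proof.
move=> /subvPn[u _ uU] /subvPn[w _ wW].
case uW: (u \in W); last by exists u; rewrite uU uW.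
case wU: (w \in U); last by exists w; rewrite wU wW.
by exists (u + w)%R; rewrite rpredDr // rpredDl // uU wW.
Qed.

Lemma line_eq (K : fieldType) (vT : vectType K) (V : {vspace vT}) (v : vT) :
  \dim V = 1 -> v \in V -> v != 0%R -> V = <[v]>%VS.
Proof.
move=> dV vV v0; apply/esym/eqP.
by have [_ <-] := dimv_leqif_eq vV; rewrite dV dim_vline v0.
Qed.

Lemma vpick_line_neq0 (K : fieldType) (vT : vectType K) (V : {vspace vT}) :
  \dim V = 1 -> vpick V != 0%R.
Proof. by move=> dV; rewrite vpick0 -dimv_eq0 dV. Qed.

Section Lines.
Variables (F : finFieldType) (n : nat) (T : finType).
Implicit Types (U : {vspace 'rV[F]_n}) (Q : {set T}) (g : T -> {vspace 'rV[F]_n}).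

Lemma dim_rV_fullv : \dim (fullv : {vspace 'rV[F]_n}) = n.
Proof. by rewrite dimvf /dim /= mul1n. Qed.

Lemma card_vspace_nz U : #|[set v in U | v != 0%R]| = (#|F| ^ \dim U).-1.
Proof.
rewrite -card_vspace (cardD1 0%R U) mem0v add1n /=.
by apply: eq_card => v; rewrite !inE andbC.
Qed.

(* Each line is counted through its q - 1 nonzero vectors c * vpick (g y). *)
Let scaled_pick g (p : T * F) : 'rV[F]_n := (p.2 *: vpick (g p.1))%R.

Let card_points_scalars Q : #|setX Q [set~ (0 : F)%R]| = #|Q| * #|F|.-1.
Proof. by rewrite cardsX cardsC1. Qed.

Let scaled_pick_inj Q g :
  {in Q &, injective g} -> {in Q, forall y, \dim (g y) = 1} ->
  {in setX Q [set~ (0 : F)%R] &, injective (scaled_pick g)}.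
Proof.
move=> ginj gdim [y c] [z d] /setXP[yQ c0] /setXP[zQ d0]; rewrite /scaled_pick /=.
rewrite !inE in c0 d0 => e.
have w0 : (c *: vpick (g y) != 0)%R by rewrite scaler_eq0 negb_or c0 vpick_line_neq0 ?gdim.
have gyz : g y = g z.
  rewrite (line_eq (gdim y yQ) (memvZ c (memv_pick _)) w0) e.
  by rewrite -(line_eq (gdim z zQ) (memvZ d (memv_pick _))) // -e.
have yz := ginj y z yQ zQ gyz; subst z; congr (_, _).
apply/eqP; rewrite -subr_eq0; apply/eqP.
apply: contra_eq e => cd; rewrite -subr_eq0 -scalerBl scaler_eq0 negb_or cd.
by rewrite vpick_line_neq0 ?gdim.
Qed.

Lemma card_lines_le Q g U :
  {in Q &, injective g} -> {in Q, forall y, \dim (g y) = 1} ->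
  {in Q, forall y, (g y <= U)%VS} -> #|Q| * #|F|.-1 <= (#|F| ^ \dim U).-1.
Proof.
move=> ginj gdim gU; rewrite -card_points_scalars -card_vspace_nz.
rewrite -(card_in_imset (scaled_pick_inj ginj gdim)); apply: subset_leq_card.
apply/subsetP => _ /imsetP[[y c] /setXP[yQ c0] ->].
rewrite inE /scaled_pick /= scaler_eq0 negb_or vpick_line_neq0 ?gdim // andbT.
by rewrite -in_setC1 c0 memvZ // (subvP (gU y yQ)) // memv_pick.
Qed.

Lemma card_lines_ge Q g :
  {in Q, forall y, \dim (g y) = 1} ->
  (forall V : {vspace 'rV[F]_n}, \dim V = 1 -> exists2 y, y \in Q & g y = V) ->
  (#|F| ^ n).-1 <= #|Q| * #|F|.-1.
Proof.
move=> gdim gsurj; rewrite -card_points_scalars -dim_rV_fullv -card_vspace_nz.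
apply: leq_trans (leq_imset_card (scaled_pick g) _); apply: subset_leq_card.
apply/subsetP => v; rewrite inE => /andP[_ v0].
have [y yQ gy] := gsurj <[v]>%VS (ltac:(by rewrite dim_vline v0)).
have gy1 := gdim y yQ.
have /vlineP[c vc] : v \in <[vpick (g y)]>%VS.
  by rewrite -(line_eq gy1) ?memv_pick ?vpick_line_neq0 // gy memv_line.
apply/imsetP; exists (y, c) => //; rewrite !inE yQ /=.
by move: v0; apply: contraNneq => c0; rewrite vc c0 scale0r.
Qed.

End Lines.

Definition PG_coords (F : finFieldType) (T : finType) (M : matroid T)
    (S : {set T}) (n : nat) (f : T -> {vspace 'rV[F]_n}) : Prop :=
  [/\ {in S &, injective f},
      (forall x : T, x \in S -> \dim (f x) = 1%N),
      (forall V : {vspace 'rV[F]_n}, \dim V = 1%N -> exists2 x, x \in S & f x = V) &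
      (forall X : {set T}, X \subset S ->
         (indep M X <-> \dim (\sum_(x in X) f x)%VS = #|X|))].

Section ProjectiveGeometry.
Variables (F : finFieldType) (T : finType) (M : matroid T).
Variables (P : {set T}) (n : nat) (f : T -> {vspace 'rV[F]_n}).
Hypothesis PGf : PG_coords M P f.

Lemma PG_dim_span (I : {set T}) :
  I \subset P -> indep M I -> \dim (\sum_(y in I) f y)%VS = #|I|.
Proof. by case: PGf => _ _ _ find sIP /(find I sIP). Qed.

Lemma PG_sub_span (A I : {set T}) (x : T) :
  A \subset P -> basis_in M A I -> x \in A -> (f x <= \sum_(y in I) f y)%VS.
Proof.
move=> sAP [sIA iI eI] xA; have [_ fdim _ find] := PGf.
have xP := subsetP sAP x xA; have sIP := subset_trans sIA sAP.
case xI: (x \in I); first by apply: (sumv_sup x).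
have dxI : \dim (f x + \sum_(y in I) f y)%VS != #|I|.+1.
  apply: contraNneq (_ : ~~ indep M (x |: I)) => [dxI|].
    by apply/find; rewrite ?subUset ?sub1set ?xP // big_setU1 ?xI //= cardsU1 xI.
  apply/negP => ixI; have := indep_leq_rank (X := A) _ ixI; rewrite subUset sub1set xA sIA.
  by rewrite cardsU1 xI eI ltnn => /(_ isT).
apply/capv_idPl/eqP; rewrite eqEdim capvSl fdim //=.
have := dimv_sum_cap (f x) (\sum_(y in I) f y); rewrite fdim // PG_dim_span //.
by move: dxI; lia.
Qed.

Lemma PG_rank : rank M P = n.
Proof.
have [_ _ fsurj _] := PGf; have [I bI] := basis_in_exists M P; have [sIP iI eI] := bI.
have full : (fullv <= \sum_(y in I) f y)%VS.
  apply/subvP => v _; have [-> | v0] := eqVneq v 0%R; first exact: mem0v.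
  have [x xP fx] := fsurj <[v]>%VS (ltac:(by rewrite dim_vline v0)).
  by rewrite memvE -fx (PG_sub_span (subxx P) bI).
have := dimvS full; rewrite dim_rV_fullv PG_dim_span // eI => le_n.
apply/eqP; rewrite eqn_leq le_n andbT -eI -(PG_dim_span sIP iI).
by have := dimvS (subvf (\sum_(y in I) f y)); rewrite dim_rV_fullv.
Qed.

Lemma PG_round_in : round_in M P.
Proof.
move=> A B eAB ltA ltB; have [_ _ fsurj _] := PGf.
have sAP : A \subset P by rewrite -eAB subsetUl.
have sBP : B \subset P by rewrite -eAB subsetUr.
have [I bI] := basis_in_exists M A; have [J bJ] := basis_in_exists M B.
have notfull (X K : {set T}) : X \subset P -> basis_in M X K -> rank M X < rank M P ->
    ~~ (fullv <= \sum_(y in K) f y)%VS.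
  move=> sXP [sKX iK eK] ltX; apply: contraL ltX => /dimvS.
  by rewrite dim_rV_fullv PG_dim_span ?(subset_trans sKX) // eK PG_rank -leqNgt.
have [v /andP[vI vJ]] := exists_notin_subv2 (notfull _ _ sAP bI ltA) (notfull _ _ sBP bJ ltB).
have v0 : v != 0%R by apply: contraNneq vI => ->; apply: mem0v.
have [x xP fx] := fsurj <[v]>%VS (ltac:(by rewrite dim_vline v0)).
move: xP; rewrite -eAB => /setUP[xA | xB].
  by move: vI; rewrite memvE -fx (PG_sub_span sAP bI).
by move: vJ; rewrite memvE -fx (PG_sub_span sBP bJ).
Qed.

End ProjectiveGeometry.

Lemma PG_sub_PG_flat (F : finFieldType) (T : finType) (M : matroid T)
    (S P : {set T}) (m k : nat) (g : T -> {vspace 'rV[F]_m}) (f : T -> {vspace 'rV[F]_k}) :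
  PG_coords M S g -> PG_coords M P f -> P \subset S -> flat_in M S P.
Proof.
move=> gS fP sPS; split=> // x /setDP[xS xP].
rewrite ltn_neqAle rankS ?subsetUr // andbT; apply/eqP => eP.
have [ginj gdim _ _] := gS; have [_ fdim fsurj _] := fP.
have [I [sIP iI eI]] := basis_in_exists M P.
have sxPS : x |: P \subset S by rewrite subUset sub1set xS.
have bI : basis_in M (x |: P) I by split; rewrite // -?eP // (subset_trans sIP) ?subsetUr.
have := card_lines_le (sub_in2 (subsetP sxPS) ginj) (sub_in1 (subsetP sxPS) gdim)
  (fun y yP => PG_sub_span gS sxPS bI yP).
rewrite (PG_dim_span gS (subset_trans sIP sPS) iI) eI (PG_rank fP) => le_xP.
have := leq_trans le_xP (card_lines_ge fdim fsurj).
have q1 : 0 < #|F|.-1 by rewrite -subn1 subn_gt0 finNzRing_gt1.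
by rewrite cardsU1 xP add1n mulSn -{2}[_ * _]add0n leq_add2r leqNgt q1.
Qed.

Section ClassMq.
Variables (F : finFieldType) (T : finType) (M : matroid T).

Definition gpc_flats (S1 S2 : {set T}) : Prop :=
  forall Z : {set T}, Z \subset S1 :|: S2 ->
    (flat_in M (S1 :|: S2) Z <-> flat_in M S1 (Z :&: S1) /\ flat_in M S2 (Z :&: S2)).

Lemma gpc_flatsC (S1 S2 : {set T}) : gpc_flats S1 S2 -> gpc_flats S2 S1.
Proof. by move=> hflat Z; rewrite setUC => /hflat; tauto. Qed.

Lemma gpc_flat_l (S1 S2 P : {set T}) :
  gpc_flats S1 S2 -> flat_in M S2 (S1 :&: S2) -> P \subset S1 -> flat_in M S1 P ->
  flat_in M (S1 :|: S2) P.
Proof.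
move=> hflat TS2 sP1 P1; apply/(hflat P (subset_trans sP1 (subsetUl _ _))).
rewrite (setIidPl sP1); split=> //.
have -> : P :&: S2 = P :&: (S1 :&: S2) by rewrite setIA (setIidPl sP1).
exact: flat_in_trans (flat_inI P1 (subsetIl _ _)) TS2.
Qed.

Lemma gpc_flat_r (S1 S2 P : {set T}) :
  gpc_flats S1 S2 -> flat_in M S1 (S1 :&: S2) -> P \subset S2 -> flat_in M S2 P ->
  flat_in M (S1 :|: S2) P.
Proof.
move=> /gpc_flatsC hflat TS1 sP2 P2; rewrite setUC.
by apply: gpc_flat_l hflat _ sP2 P2; rewrite setIC.
Qed.

Lemma round_in_sub_flat (S A B P : {set T}) :
  flat_in M S A -> flat_in M S B -> P \subset S -> P \subset A :|: B -> round_in M P ->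
  P \subset A \/ P \subset B.
Proof.
move=> fA fB sPS sPAB rP; case: (boolP (P \subset A)) => [|nPA]; [by left | right].
apply: contraT => nPB; exfalso.
have [x xP xA] := subsetPn nPA; have [y yP yB] := subsetPn nPB.
apply: (rP (A :&: P) (B :&: P)); first by rewrite -setIUl (setIidPr sPAB).
  by apply: flat_rank_lt (flat_inI fA sPS) xP _; rewrite inE negb_and xA.
by apply: flat_rank_lt (flat_inI fB sPS) yP _; rewrite inE negb_and yB.
Qed.

Lemma Mq_PG_flat (S P : {set T}) (n : nat) (f : T -> {vspace 'rV[F]_n}) :
  inMq F M S -> P \subset S -> PG_coords M P f -> flat_in M S P.
Proof.
move=> MqS; elim: MqS P n f => [S0 m _ [g gS] | S1 S2 m _ IH1 _ IH2 [TS1 _] [g gT] hflat]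
  P n f sPS fP; first exact: PG_sub_PG_flat gS fP sPS.
have TS2 := IH2 _ _ _ (subsetIr S1 S2) gT.
have S1f := gpc_flat_l hflat TS2 (subxx _) (flat_in_refl M S1).
have S2f := gpc_flat_r hflat TS1 (subxx _) (flat_in_refl M S2).
case: (round_in_sub_flat S1f S2f sPS sPS (PG_round_in fP)) => [sP1 | sP2].
  exact: gpc_flat_l hflat TS2 sP1 (IH1 _ _ _ sP1 fP).
exact: gpc_flat_r hflat TS1 sP2 (IH2 _ _ _ sP2 fP).
Qed.

Lemma Mq_round_PG (S : {set T}) :
  inMq F M S -> round_in M S -> exists n, PG_iso F M S n.
Proof.
elim=> [S0 m _ PGS _ | S1 S2 m _ IH1 MqS2 IH2 [TS1 _] [g gT] hflat rS].
  by exists m.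
have TS2 := Mq_PG_flat MqS2 (subsetIr S1 S2) gT.
have S1f := gpc_flat_l hflat TS2 (subxx _) (flat_in_refl M S1).
have S2f := gpc_flat_r hflat TS1 (subxx _) (flat_in_refl M S2).
case: (round_in_sub_flat S1f S2f (subxx _) (subxx _) rS) => /subUsetP[s12 s21].
  by rewrite (setUidPl s21) in rS *; apply: IH1.
by rewrite (setUidPr s12) in rS *; apply: IH2.
Qed.

End ClassMq.

Theorem lemma3p7 (F : finFieldType) (T : finType) (M : matroid T) (r : nat) :
  inMq F M (ground M) -> rank M (ground M) = r ->
  (round M <-> PG_iso F M (ground M) r).
Proof.
move=> MqE rE; split=> [/round_groundP rM | [f fE]].
  have [n [f fE]] := Mq_round_PG MqE rM.
  by rewrite -rE (PG_rank fE); exists f.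
by apply/round_groundP; apply: PG_round_in fE.
Qed.
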